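(* Let $\alpha\in(0,1]$ and $\beta\in(0,\alpha)$. Every $K\in\mathcal{K}$ satisfies \[ |K(x,y)-K(x',y')|\le3\|K\|(|x-x'|+|y-y'|)^\beta . \] If $K,K'\in\mathcal{K}$, then $K+K'\in\mathcal{K}$ with $\|K+K'\|\le\|K\|+\|K'\|$, and (for compatible matrix sizes) $KK'\in\mathcal{K}$ with $\|KK'\|\le6\|K\|\|K'\|$. Finally, if $K\in\mathcal{K}$ is everywhere invertible and $|K^{-1}|\le h$ for some finite $h$, then $K^{-1}\in\mathcal{K}$ and $\|K^{-1}\|\le5\max(1,h^3)\max(1,\|K\|^3)$.
   Context: $\mathbb{R}^d=\mathbb{R}^{d_u}\times\mathbb{R}^{d_s}$ with points $(x,y)$; matrix norms are operator norms. $\mathcal{K}=\mathcal{K}^{\alpha,\beta}$ is the class of matrix-valued functions $K$ on $\mathbb{R}^d$ for which there is a constant $C$ such that for all $x,x'\in\mathbb{R}^{d_u}$ and $y,y'\in\mathbb{R}^{d_s}$: $|K(x,y)|\le C$; $|K(x,y)-K(x',y)|\le C|x-x'|^\beta$; $|K(x,y)-K(x,y')|\le C|y-y'|^\alpha$; and $|K(x,y)-K(x',y)-K(x,y')+K(x',y')|\le C|x-x'|^\beta|y-y'|^{\alpha-\beta}$. For $K\in\mathcal{K}$, $\|K\|$ is the smallest such $C$. *)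

From HB Require Import structures.
From mathcomp Require Import all_boot all_order all_algebra.
From mathcomp Require Import classical_sets boolp reals exp.
Set Implicit Arguments. Unset Strict Implicit. Unset Printing Implicit Defensive.
Import Order.TTheory GRing.Theory Num.Theory.
Local Open Scope classical_set_scope.
Local Open Scope ring_scope.

(* Euclidean (Frobenius) norm of a matrix; on row/column vectors this is the
   Euclidean norm of R^n. *)
Definition enorm (R : realType) (p q : nat) (A : 'M[R]_(p, q)) : R :=
  Num.sqrt (\sum_(i < p) \sum_(j < q) A i j ^+ 2).

Definition opnorm (R : realType) (m n : nat) (A : 'M[R]_(m, n)) : R :=
  sup [set enorm (A *m v) | v in [set v : 'cV[R]_n | enorm v <= 1]].

(* Points of R^d = R^{du} x R^{ds} are pairs (x, y) of row vectors. *)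
Definition Kbound (R : realType) (du ds m n : nat) (alpha beta : R)
  (K : 'rV[R]_du -> 'rV[R]_ds -> 'M[R]_(m, n)) (C : R) : Prop :=
  forall (x x' : 'rV[R]_du) (y y' : 'rV[R]_ds),
    [/\ opnorm (K x y) <= C,
        opnorm (K x y - K x' y) <= C * powR (enorm (x - x')) beta,
        opnorm (K x y - K x y') <= C * powR (enorm (y - y')) alpha
      & opnorm (K x y - K x' y - K x y' + K x' y')
          <= C * powR (enorm (x - x')) beta * powR (enorm (y - y')) (alpha - beta)].

Definition inK (R : realType) (du ds m n : nat) (alpha beta : R)
  (K : 'rV[R]_du -> 'rV[R]_ds -> 'M[R]_(m, n)) : Prop :=
  exists C, Kbound alpha beta K C.

Definition Knorm (R : realType) (du ds m n : nat) (alpha beta : R)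
  (K : 'rV[R]_du -> 'rV[R]_ds -> 'M[R]_(m, n)) : R :=
  inf [set C | Kbound alpha beta K C].

From HB Require Import structures.
From mathcomp Require Import all_boot all_order all_algebra.
From mathcomp Require Import classical_sets boolp reals exp.
From mathcomp Require Import ring lra.
Import Order.TTheory GRing.Theory Num.Theory.
Local Open Scope ring_scope.

Set Implicit Arguments.
Unset Strict Implicit.

(* The operator norm is subadditive and submultiplicative, so each of the four
   estimates defining the class, for a sum, a product or an inverse, follows by
   splitting the relevant first or mixed second difference algebraically (a
   product rule, and [A^-1 - B^-1 = A^-1 (B - A) B^-1] for inverses) into terms
   controlled by the estimates for the factors. The only analytic input is that
   the two bounds [2 ||K||] and [||K|| |y - y'|^alpha] on [K x y - K x y']
   combine into [2 ||K|| |y - y'|^gamma] for every [0 < gamma <= alpha], used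
   with [gamma = alpha - beta] and [gamma = beta]. Finally [||K||] is itself an
   admissible constant, since every estimate is a closed condition on it. *)

Section MatrixNorms.
Variable R : realType.

Lemma sumr_sqr_ge0 (I : finType) (F : I -> R) : 0 <= \sum_i F i ^+ 2.
Proof. by apply: sumr_ge0 => i _; exact: sqr_ge0. Qed.

(* The quadratic t |-> sum_i (t F i + G i)^2 is nonnegative; evaluate it at its minimum. *)
Lemma sum_mul_sqr_le (I : finType) (F G : I -> R) :
  (\sum_i F i * G i) ^+ 2 <= (\sum_i F i ^+ 2) * (\sum_i G i ^+ 2).
Proof.
set a := \sum_i F i ^+ 2; set b := \sum_i G i ^+ 2; set c := \sum_i F i * G i.
have quad_ge0 t : 0 <= t ^+ 2 * a + (2 * t) * c + b.
  have -> : t ^+ 2 * a + (2 * t) * c + b = \sum_i (t * F i + G i) ^+ 2.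
    rewrite /a /b /c !mulr_sumr -!big_split /=; apply: eq_bigr => i _; ring.
  exact: sumr_sqr_ge0.
have [a0|an0] := eqVneq a 0.
  have F0 i : F i = 0.
    apply/eqP; rewrite -sqrf_eq0; apply/eqP.
    by apply: (psumr_eq0P _ a0) => // j _; exact: sqr_ge0.
  by rewrite /c big1 ?expr0n ?mulr_ge0 ?sumr_sqr_ge0 // => i _; rewrite F0 mul0r.
have a_gt0 : 0 < a by rewrite lt_neqAle eq_sym an0 sumr_sqr_ge0.
have := quad_ge0 (- c / a).
have -> : (- c / a) ^+ 2 * a + 2 * (- c / a) * c + b = (a * b - c ^+ 2) / a.
  by field; rewrite an0.
by rewrite pmulr_lge0 ?invr_gt0 // subr_ge0 mulrC.
Qed.

Lemma enorm_col n (v : 'cV[R]_n) : enorm v = Num.sqrt (\sum_i v i ord0 ^+ 2).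
Proof. by rewrite /enorm; congr Num.sqrt; apply: eq_bigr => i _; rewrite big_ord1. Qed.

Lemma enorm_ge0 p q (A : 'M[R]_(p, q)) : 0 <= enorm A.
Proof. exact: sqrtr_ge0. Qed.

Lemma enorm0 p q : enorm (0 : 'M[R]_(p, q)) = 0.
Proof.
by rewrite /enorm big1 ?sqrtr0 // => i _; rewrite big1 // => j _; rewrite mxE expr0n.
Qed.

Lemma enormZ n c (v : 'cV[R]_n) : enorm (c *: v) = `|c| * enorm v.
Proof.
rewrite !enorm_col -sqrtr_sqr -sqrtrM ?sqr_ge0 //; congr Num.sqrt.
by rewrite mulr_sumr; apply: eq_bigr => i _; rewrite mxE; ring.
Qed.

Lemma enormD n (u v : 'cV[R]_n) : enorm (u + v) <= enorm u + enorm v.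
Proof.
rewrite !enorm_col.
set a := \sum_i u i ord0 ^+ 2; set b := \sum_i v i ord0 ^+ 2.
set c := \sum_i u i ord0 * v i ord0.
have a0 : 0 <= a by exact: sumr_sqr_ge0.
have b0 : 0 <= b by exact: sumr_sqr_ge0.
have -> : \sum_i (u + v) i ord0 ^+ 2 = a + 2 * c + b.
  rewrite /a /b /c mulr_sumr -!big_split /=.
  by apply: eq_bigr => i _; rewrite mxE; ring.
have c_le : c <= Num.sqrt a * Num.sqrt b.
  rewrite -sqrtrM // (le_trans (ler_norm c)) // -sqrtr_sqr ler_sqrt ?mulr_ge0 //.
  exact: sum_mul_sqr_le.
have s0 : 0 <= Num.sqrt a + Num.sqrt b by rewrite addr_ge0 ?sqrtr_ge0.
rewrite -(ger0_norm s0) -sqrtr_sqr ler_sqrt ?sqr_ge0 // sqrrD !sqr_sqrtr //.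
lra.
Qed.

Lemma enorm_mulmx_le m n (A : 'M[R]_(m, n)) (v : 'cV[R]_n) :
  enorm (A *m v) <= enorm A * enorm v.
Proof.
have A0 : 0 <= \sum_i \sum_j A i j ^+ 2 by apply: sumr_ge0 => i _; exact: sumr_sqr_ge0.
rewrite !enorm_col /enorm -sqrtrM // ler_sqrt ?mulr_ge0 ?sumr_sqr_ge0 //.
by rewrite mulr_suml; apply: ler_sum => i _; rewrite mxE; exact: sum_mul_sqr_le.
Qed.

Local Open Scope classical_set_scope.

Lemma enorm_mulmx_le_opnorm m n (A : 'M[R]_(m, n)) (v : 'cV[R]_n) :
  enorm v <= 1 -> enorm (A *m v) <= opnorm A.
Proof.
move=> v1; apply: ub_le_sup; last by exists v.
exists (enorm A) => _ [w /= w1 <-].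
by rewrite (le_trans (enorm_mulmx_le A w)) // ler_piMr ?enorm_ge0.
Qed.

Lemma opnorm_le m n (A : 'M[R]_(m, n)) c :
  (forall v : 'cV[R]_n, enorm v <= 1 -> enorm (A *m v) <= c) -> opnorm A <= c.
Proof.
move=> Ac; apply: ge_sup => [|_ [v /= v1 <-]]; last exact: Ac.
by exists (enorm (A *m (0 : 'cV[R]_n))), 0 => //=; rewrite enorm0.
Qed.

Lemma opnorm_ge0 m n (A : 'M[R]_(m, n)) : 0 <= opnorm A.
Proof.
by rewrite (le_trans (enorm_ge0 (A *m (0 : 'cV[R]_n)))) // enorm_mulmx_le_opnorm // enorm0.
Qed.

Lemma enorm_mulmx_opnorm m n (A : 'M[R]_(m, n)) (v : 'cV[R]_n) :
  enorm (A *m v) <= opnorm A * enorm v.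
Proof.
have [v0|vn0] := eqVneq (enorm v) 0.
  by rewrite v0 mulr0 (le_trans (enorm_mulmx_le A v)) // v0 mulr0.
have v_gt0 : 0 < enorm v by rewrite lt_neqAle eq_sym vn0 enorm_ge0.
have := enorm_mulmx_le_opnorm A (v := (enorm v)^-1 *: v).
rewrite enormZ -scalemxAr enormZ ger0_norm ?invr_ge0 ?enorm_ge0 // mulVf //.
by move=> /(_ (lexx _)); rewrite -(ler_pM2r v_gt0) mulrAC mulVf // mul1r.
Qed.

Lemma opnormD m n (A B : 'M[R]_(m, n)) : opnorm (A + B) <= opnorm A + opnorm B.
Proof.
apply: opnorm_le => v v1; rewrite mulmxDl (le_trans (enormD _ _)) //.
by rewrite lerD // enorm_mulmx_le_opnorm.
Qed.

Lemma opnormN m n (A : 'M[R]_(m, n)) : opnorm (- A) = opnorm A.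
Proof.
have opnormN_le (B : 'M[R]_(m, n)) : opnorm (- B) <= opnorm B.
  apply: opnorm_le => v v1; rewrite mulNmx -scaleN1r enormZ normrN1 mul1r.
  exact: enorm_mulmx_le_opnorm.
by apply/eqP; rewrite eq_le opnormN_le -{1}[A]opprK opnormN_le.
Qed.

Lemma opnormB m n (A B : 'M[R]_(m, n)) : opnorm (A - B) <= opnorm A + opnorm B.
Proof. by rewrite -(opnormN B) opnormD. Qed.

Lemma opnorm_distC m n (A B : 'M[R]_(m, n)) : opnorm (A - B) = opnorm (B - A).
Proof. by rewrite -opnormN opprB. Qed.

Lemma opnormM m n p (A : 'M[R]_(m, n)) (B : 'M[R]_(n, p)) :
  opnorm (A *m B) <= opnorm A * opnorm B.
Proof.
apply: opnorm_le => v v1; rewrite -mulmxA (le_trans (enorm_mulmx_opnorm _ _)) //.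
rewrite ler_wpM2l ?opnorm_ge0 // (le_trans (enorm_mulmx_opnorm _ _)) //.
by rewrite ler_piMr ?opnorm_ge0.
Qed.

Lemma opnorm_mulmx_le m n p (A : 'M[R]_(m, n)) (B : 'M[R]_(n, p)) a b :
  opnorm A <= a -> opnorm B <= b -> opnorm (A *m B) <= a * b.
Proof. by move=> Aa Bb; rewrite (le_trans (opnormM _ _)) // ler_pM ?opnorm_ge0. Qed.

End MatrixNorms.

Section RealFacts.
Variable R : realType.
Local Open Scope classical_set_scope.

Lemma le_inf_mulr (S : set R) (f t : R) : S !=set0 -> has_lbound S -> 0 <= t ->
  (forall C, S C -> f <= C * t) -> f <= inf S * t.
Proof.
move=> S0 Slb t0 fS; apply/ler_addgt0Pr => e e0.
have t1 : 0 < t + 1 by rewrite ltr_wpDl.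
have [C SC Ce] := inf_adherent (divr_gt0 e0 t1) (conj S0 Slb).
rewrite (le_trans (fS C SC)) // (le_trans (ler_wpM2r t0 (ltW Ce))) // mulrDl lerD2l.
rewrite -{2}(divfK (lt0r_neq0 t1) e) ler_wpM2l ?divr_ge0 ?ltW //.
by rewrite ltrDl.
Qed.

(* Interpolation between the bounds [2 C] (good for [b > 1]) and [C b^r] (good for [b <= 1]). *)
Lemma le_powR_interp (f C b r g : R) : 0 < g <= r -> 0 <= C -> 0 <= b ->
  f <= 2 * C -> f <= C * powR b r -> f <= 2 * C * powR b g.
Proof.
move=> /andP[g0 gr] C0 b0 f2C fCb.
have [b1|b1] := lerP b 1.
  have brg : powR b r <= powR b g.
    have [->|bn0] := eqVneq b 0; first by rewrite !powR0 ?gt_eqF // (lt_le_trans g0).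
    by apply: ger_powR; rewrite // b1 andbT lt_neqAle eq_sym bn0.
  have := ler_wpM2l C0 brg; have := mulr_ge0 C0 (powR_ge0 b g); lra.
apply: (le_trans f2C); rewrite ler_peMr ?mulr_ge0 //.
by rewrite -(powRr0 b) ler_powR ?ltW.
Qed.

Lemma max1_ge1 (x : R) : 1 <= Num.max 1 x.
Proof. by rewrite le_max lexx. Qed.

Lemma le_max1_cube (x : R) : 0 <= x -> x <= Num.max 1 (x ^+ 3).
Proof.
move=> x0; rewrite le_max; have [//|x1] := lerP x 1.
by rewrite ler_eXnr // ltW.
Qed.

Lemma sqr_le_max1_cube (x : R) : 0 <= x -> x ^+ 2 <= Num.max 1 (x ^+ 3).
Proof.
move=> x0; rewrite le_max; have [x1|x1] := lerP x 1; first by rewrite exprn_ile1.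
by apply/orP; right; rewrite (exprS x 2) ler_peMl ?exprn_ge0 // ltW.
Qed.

End RealFacts.

Lemma subr_trans (V : zmodType) (a b c : V) : a - b + (b - c) = a - c.
Proof. by rewrite addrA subrK. Qed.

Lemma subrBBD (V : zmodType) (a b c d : V) : a - b - c + d = (a - b) - (c - d).
Proof. by rewrite opprB addrA addrAC. Qed.

Lemma subrDD (V : zmodType) (a a' b b' : V) : (a + a') - (b + b') = (a - b) + (a' - b').
Proof. by rewrite opprD addrACA. Qed.

Lemma addr_mixed_diff (V : zmodType) (a1 a2 a3 a4 b1 b2 b3 b4 : V) :
  (a1 + b1) - (a2 + b2) - (a3 + b3) + (a4 + b4) =
    (a1 - a2 - a3 + a4) + (b1 - b2 - b3 + b4).
Proof. by rewrite (subrDD a1) (subrDD (a1 - a2)) addrACA. Qed.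

Lemma mulmxBBl (R : pzRingType) m n p (A B : 'M[R]_(m, n)) (C D : 'M[R]_(n, p)) :
  A *m C - B *m D = (A - B) *m C + B *m (C - D).
Proof. by rewrite mulmxBl mulmxBr subr_trans. Qed.

Lemma mulmxBBr (R : pzRingType) m n p (A B : 'M[R]_(m, n)) (C D : 'M[R]_(n, p)) :
  A *m C - B *m D = A *m (C - D) + (A - B) *m D.
Proof. by rewrite mulmxBr mulmxBl subr_trans. Qed.

Lemma mulmx_mixed_diff (R : pzRingType) m n p (A1 A2 A3 A4 : 'M[R]_(m, n)) (B1 B2 B3 B4 : 'M[R]_(n, p)) :
  A1 *m B1 - A2 *m B2 - A3 *m B3 + A4 *m B4 =
    ((A1 - A2) - (A3 - A4)) *m B1 + (A3 - A4) *m (B1 - B3)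
    + (A2 *m ((B1 - B2) - (B3 - B4)) + (A2 - A4) *m (B3 - B4)).
Proof.
rewrite subrBBD (mulmxBBl A1) (mulmxBBl A3) opprD addrACA.
by rewrite (mulmxBBl (A1 - A2)) (mulmxBBr A2 A4 (B1 - B2)).
Qed.

Lemma invmxB (R : comUnitRingType) n (A B : 'M[R]_n) : A \in unitmx -> B \in unitmx ->
  invmx A - invmx B = invmx A *m (B - A) *m invmx B.
Proof.
move=> uA uB; rewrite mulmxBr mulmxBl -mulmxA mulmxV // mulmx1.
by rewrite mulVmx // mul1mx.
Qed.

Lemma invmx_mixed_diff (R : comUnitRingType) n (A1 A2 A3 A4 : 'M[R]_n) :
  A1 \in unitmx -> A2 \in unitmx -> A3 \in unitmx -> A4 \in unitmx ->
  invmx A1 - invmx A2 - invmx A3 + invmx A4 =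
    - (invmx A2 *m ((A1 - A2) - (A3 - A4)) *m invmx A1
       + invmx A2 *m (A4 - A2) *m invmx A4 *m (A3 - A4) *m invmx A1
       + invmx A4 *m (A3 - A4) *m (invmx A1 *m (A3 - A1) *m invmx A3)).
Proof.
move=> u1 u2 u3 u4.
rewrite subrBBD -[invmx A1 - _]opprB -[invmx A3 - _]opprB -opprD.
rewrite (invmxB u2 u1) (invmxB u4 u3) mulmxBBl mulmxBBr mulmxDl.
by rewrite (invmxB u2 u4) (invmxB u1 u3).
Qed.

Section HolderClass.
Variables (R : realType) (du ds : nat) (alpha beta : R).
Local Open Scope classical_set_scope.

Lemma Kbound_ge0 m n (K : 'rV[R]_du -> 'rV[R]_ds -> 'M[R]_(m, n)) C :
  Kbound alpha beta K C -> 0 <= C.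
Proof. by move=> /(_ 0 0 0 0) [KC _ _ _]; exact: le_trans (opnorm_ge0 _) KC. Qed.

Lemma Knorm_le m n (K : 'rV[R]_du -> 'rV[R]_ds -> 'M[R]_(m, n)) C :
  Kbound alpha beta K C -> Knorm alpha beta K <= C.
Proof. by move=> KC; apply: ge_inf KC; exists 0 => c /Kbound_ge0. Qed.

Lemma inK_Knorm_le m n (K : 'rV[R]_du -> 'rV[R]_ds -> 'M[R]_(m, n)) C :
  Kbound alpha beta K C -> inK alpha beta K /\ Knorm alpha beta K <= C.
Proof. by move=> KC; split; [exists C | exact: Knorm_le]. Qed.

(* Each of the four bounds is of the form [f <= C * t] with [t >= 0], a closed condition on [C]. *)
Lemma Kbound_Knorm m n (K : 'rV[R]_du -> 'rV[R]_ds -> 'M[R]_(m, n)) :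
  inK alpha beta K -> Kbound alpha beta K (Knorm alpha beta K).
Proof.
move=> [C0 KC0].
have S0 : [set C | Kbound alpha beta K C] !=set0 by exists C0.
have Slb : has_lbound [set C | Kbound alpha beta K C] by exists 0 => C /Kbound_ge0.
move=> x x' y y'; split.
- rewrite -[Knorm _ _ _]mulr1; apply: le_inf_mulr => // C /(_ x x' y y') [KC _ _ _].
  by rewrite mulr1.
- by apply: le_inf_mulr => // [|C /(_ x x' y y') []//]; exact: powR_ge0.
- by apply: le_inf_mulr => // [|C /(_ x x' y y') []//]; exact: powR_ge0.
- rewrite -mulrA; apply: le_inf_mulr => //; first by rewrite mulr_ge0 ?powR_ge0.
  by move=> C /(_ x x' y y') [_ _ _]; rewrite mulrA.
Qed.

Lemma Kbound_dist_y m n (K : 'rV[R]_du -> 'rV[R]_ds -> 'M[R]_(m, n)) C g x y y' :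
  0 < g <= alpha -> Kbound alpha beta K C ->
  opnorm (K x y - K x y') <= 2 * C * powR (enorm (y - y')) g.
Proof.
move=> g_alpha KC; apply: le_powR_interp g_alpha (Kbound_ge0 KC) (enorm_ge0 _) _ _.
  have [Ky _ _ _] := KC x x y y; have [Ky' _ _ _] := KC x x y' y'.
  by rewrite (le_trans (opnormB _ _)) // mulr2n mulrDl mul1r lerD.
by have [_ _ Kyy' _] := KC x x y y'.
Qed.

Hypotheses (beta_gt0 : 0 < beta) (beta_lt_alpha : beta < alpha).

Let beta_le_alpha : 0 < beta <= alpha.
Proof. by rewrite beta_gt0 ltW. Qed.

Let alpha_beta_le_alpha : 0 < alpha - beta <= alpha.
Proof. by rewrite subr_gt0 beta_lt_alpha gerBl ltW. Qed.

Lemma Kbound_dist m n (K : 'rV[R]_du -> 'rV[R]_ds -> 'M[R]_(m, n)) C x x' y y' :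
  Kbound alpha beta K C ->
  opnorm (K x y - K x' y') <= 3 * C * powR (enorm (x - x') + enorm (y - y')) beta.
Proof.
move=> KC; have C0 := Kbound_ge0 KC.
have [_ Kx _ _] := KC x x' y y'.
have Ky := Kbound_dist_y x' y y' beta_le_alpha KC.
set a := enorm (x - x') in Kx *; set b := enorm (y - y') in Ky *.
have [a0 b0] : 0 <= a /\ 0 <= b by split; exact: enorm_ge0.
have pow_le c : 0 <= c -> c <= a + b -> C * powR c beta <= C * powR (a + b) beta.
  move=> c0 cab; rewrite ler_wpM2l // ge0_ler_powR ?nnegrE ?addr_ge0 //.
  exact: ltW.
rewrite -(subr_trans (K x y) (K x' y)); apply: le_trans (opnormD _ _) _.
apply: le_trans (lerD Kx Ky) _.
have -> : 3 * C * powR (a + b) beta = C * powR (a + b) beta + 2 * (C * powR (a + b) beta).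
  by ring.
rewrite -mulrA; apply: lerD; last apply: ler_wpM2l => //.
  by apply: pow_le; rewrite ?lerDl.
by apply: pow_le; rewrite ?lerDr.
Qed.

Lemma Kbound_add m n (K K' : 'rV[R]_du -> 'rV[R]_ds -> 'M[R]_(m, n)) C C' :
  Kbound alpha beta K C -> Kbound alpha beta K' C' ->
  Kbound alpha beta (fun x y => K x y + K' x y) (C + C').
Proof.
move=> KC KC' x x' y y'.
have [k1 k2 k3 k4] := KC x x' y y'; have [l1 l2 l3 l4] := KC' x x' y y'.
split.
- exact: le_trans (opnormD _ _) (lerD k1 l1).
- rewrite (subrDD (K x y)) mulrDl; exact: le_trans (opnormD _ _) (lerD k2 l2).
- rewrite (subrDD (K x y)) mulrDl; exact: le_trans (opnormD _ _) (lerD k3 l3).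
- rewrite addr_mixed_diff !mulrDl; exact: le_trans (opnormD _ _) (lerD k4 l4).
Qed.

Lemma Kbound_mul m n p (K : 'rV[R]_du -> 'rV[R]_ds -> 'M[R]_(m, n))
    (K' : 'rV[R]_du -> 'rV[R]_ds -> 'M[R]_(n, p)) C C' :
  Kbound alpha beta K C -> Kbound alpha beta K' C' ->
  Kbound alpha beta (fun x y => K x y *m K' x y) (6 * C * C').
Proof.
move=> KC KC' x x' y y'.
have C0 := Kbound_ge0 KC; have C'0 := Kbound_ge0 KC'.
have [k1 k2 k3 k4] := KC x x' y y'; have [l1 l2 l3 l4] := KC' x x' y y'.
have [k1' _ _ _] := KC x' x' y y'; have [_ k2' _ _] := KC x x' y' y'.
have [k1'' _ _ _] := KC x x y' y'; have [_ l2' _ _] := KC' x x' y' y'.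
have Ky := Kbound_dist_y x' y y' alpha_beta_le_alpha KC.
have K'y := Kbound_dist_y x y y' alpha_beta_le_alpha KC'.
rewrite subrBBD in k4; rewrite subrBBD in l4.
set a := powR (enorm (x - x')) beta in k2 k4 l2 l4 k2' l2' *.
set b := powR (enorm (y - y')) (alpha - beta) in k4 l4 Ky K'y *.
set c := powR (enorm (y - y')) alpha in k3 l3 *.
have [a0 c0] : 0 <= a /\ 0 <= c by split; exact: powR_ge0.
split => /=.
- apply: le_trans (opnorm_mulmx_le k1 l1) _.
  by rewrite -mulrA ler_peMl ?mulr_ge0 ?ler1n.
- rewrite mulmxBBl; apply: le_trans (opnormD _ _) _.
  apply: le_trans (lerD (opnorm_mulmx_le k2 l1) (opnorm_mulmx_le k1' l2)) _.
  rewrite -subr_ge0.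
  have -> : 6 * C * C' * a - (C * a * C' + C * (C' * a)) = 4 * (C * C' * a) by ring.
  exact: mulr_ge0 (ler0n _ 4) (mulr_ge0 (mulr_ge0 C0 C'0) a0).
- rewrite mulmxBBl; apply: le_trans (opnormD _ _) _.
  apply: le_trans (lerD (opnorm_mulmx_le k3 l1) (opnorm_mulmx_le k1'' l3)) _.
  rewrite -subr_ge0.
  have -> : 6 * C * C' * c - (C * c * C' + C * (C' * c)) = 4 * (C * C' * c) by ring.
  exact: mulr_ge0 (ler0n _ 4) (mulr_ge0 (mulr_ge0 C0 C'0) c0).
- rewrite mulmx_mixed_diff; apply: le_trans (opnormD _ _) _.
  apply: le_trans (lerD (opnormD _ _) (opnormD _ _)) _.
  have -> : 6 * C * C' * a * b = C * a * b * C' + C * a * (2 * C' * b)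
      + (C * (C' * a * b) + 2 * C * b * (C' * a)) by ring.
  exact: lerD (lerD (opnorm_mulmx_le k4 l1) (opnorm_mulmx_le k2' K'y))
              (lerD (opnorm_mulmx_le k1' l4) (opnorm_mulmx_le Ky l2')).
Qed.

Lemma Kbound_inv n (K : 'rV[R]_du -> 'rV[R]_ds -> 'M[R]_n) C h :
  Kbound alpha beta K C -> (forall x y, K x y \in unitmx) ->
  (forall x y, opnorm (invmx (K x y)) <= h) ->
  Kbound alpha beta (fun x y => invmx (K x y))
    (5 * Num.max 1 (h ^+ 3) * Num.max 1 (C ^+ 3)).
Proof.
move=> KC Ku Kh.
have C0 := Kbound_ge0 KC; have h0 : 0 <= h := le_trans (opnorm_ge0 _) (Kh 0 0).
set M := Num.max 1 (h ^+ 3); set N := Num.max 1 (C ^+ 3).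
have [M1 N1] : 1 <= M /\ 1 <= N by split; exact: max1_ge1.
have MN0 : 0 <= M * N by rewrite mulr_ge0 // (le_trans ler01).
have h_le : h <= 5 * M * N.
  rewrite -mulrA (le_trans _ (ler_peMl MN0 (ler1n _ 5))) //.
  by rewrite -[h]mulr1 ler_pM ?le_max1_cube.
have h2C_le : h ^+ 2 * C <= M * N.
  by rewrite ler_pM ?exprn_ge0 ?sqr_le_max1_cube ?le_max1_cube.
have h3C2_le : h ^+ 3 * C ^+ 2 <= M * N.
  by rewrite ler_pM ?exprn_ge0 ?sqr_le_max1_cube // le_max lexx orbT.
have first_order t : 0 <= t -> h * (C * t) * h <= 5 * M * N * t.
  move=> t0; have := ler_wpM2r t0 h2C_le; have := mulr_ge0 MN0 t0.
  lra.
have second_order t s : 0 <= t -> 0 <= s ->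
    h * (C * t * s) * h + h * (2 * C * s) * h * (C * t) * h
      + h * (C * t) * (h * (2 * C * s) * h) <= 5 * M * N * t * s.
  move=> t0 s0; have ts0 := mulr_ge0 t0 s0.
  have := ler_wpM2r ts0 h2C_le; have := ler_wpM2r ts0 h3C2_le.
  have := mulr_ge0 MN0 ts0; lra.
move=> x x' y y'.
have [_ k2 k3 k4] := KC x x' y y'; have [_ k2' _ _] := KC x x' y' y'.
have Ky := Kbound_dist_y x' y y' alpha_beta_le_alpha KC.
have K'y := Kbound_dist_y x y y' alpha_beta_le_alpha KC.
rewrite opnorm_distC in Ky; rewrite opnorm_distC in K'y.
rewrite subrBBD in k4.
split => /=.
- exact: le_trans (Kh x y) h_le.
- apply: le_trans _ (first_order _ (powR_ge0 _ _)).
  rewrite invmxB //; apply: opnorm_mulmx_le (Kh x' y).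
  by apply: opnorm_mulmx_le (Kh x y) _; rewrite opnorm_distC.
- apply: le_trans _ (first_order _ (powR_ge0 _ _)).
  rewrite invmxB //; apply: opnorm_mulmx_le (Kh x y').
  by apply: opnorm_mulmx_le (Kh x y) _; rewrite opnorm_distC.
- rewrite (invmx_mixed_diff (Ku x y) (Ku x' y) (Ku x y') (Ku x' y')) opnormN.
  apply: le_trans _ (second_order _ _ (powR_ge0 _ _) (powR_ge0 _ _)).
  apply: le_trans (opnormD _ _) (lerD (le_trans (opnormD _ _) (lerD _ _)) _).
  + exact: opnorm_mulmx_le (opnorm_mulmx_le (Kh x' y) k4) (Kh x y).
  + exact: opnorm_mulmx_le (opnorm_mulmx_le (opnorm_mulmx_le
      (opnorm_mulmx_le (Kh x' y) Ky) (Kh x' y')) k2') (Kh x y).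
  + exact: opnorm_mulmx_le (opnorm_mulmx_le (Kh x' y') k2')
      (opnorm_mulmx_le (opnorm_mulmx_le (Kh x y) K'y) (Kh x y')).
Qed.

End HolderClass.

Theorem mainTheorem10 (R : realType) (du ds : nat) (alpha beta : R)
  (ha0 : 0 < alpha) (ha1 : alpha <= 1) (hb0 : 0 < beta) (hba : beta < alpha) :
  [/\ (forall (m n : nat) (K : 'rV[R]_du -> 'rV[R]_ds -> 'M[R]_(m, n)),
         inK alpha beta K ->
         forall (x x' : 'rV[R]_du) (y y' : 'rV[R]_ds),
           opnorm (K x y - K x' y') <=
             3 * Knorm alpha beta K * powR (enorm (x - x') + enorm (y - y')) beta),
      (forall (m n : nat) (K K' : 'rV[R]_du -> 'rV[R]_ds -> 'M[R]_(m, n)),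
         inK alpha beta K -> inK alpha beta K' ->
         inK alpha beta (fun x y => K x y + K' x y) /\
         Knorm alpha beta (fun x y => K x y + K' x y)
           <= Knorm alpha beta K + Knorm alpha beta K'),
      (forall (m n p : nat) (K : 'rV[R]_du -> 'rV[R]_ds -> 'M[R]_(m, n))
              (K' : 'rV[R]_du -> 'rV[R]_ds -> 'M[R]_(n, p)),
         inK alpha beta K -> inK alpha beta K' ->
         inK alpha beta (fun x y => K x y *m K' x y) /\
         Knorm alpha beta (fun x y => K x y *m K' x y)
           <= 6 * Knorm alpha beta K * Knorm alpha beta K')
    & (forall (n : nat) (K : 'rV[R]_du -> 'rV[R]_ds -> 'M[R]_n) (h : R),
         inK alpha beta K ->
         (forall x y, K x y \in unitmx) ->
         (forall x y, opnorm (invmx (K x y)) <= h) ->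
         inK alpha beta (fun x y => invmx (K x y)) /\
         Knorm alpha beta (fun x y => invmx (K x y))
           <= 5 * Num.max 1 (h ^+ 3) * Num.max 1 (Knorm alpha beta K ^+ 3))].
Proof.
(* [ha0] follows from [hb0] and [hba]. *)
split.
- move=> m n K /Kbound_Knorm KC x x' y y'.
  exact: (Kbound_dist hb0 hba x x' y y' KC).
- move=> m n K K' /Kbound_Knorm KC /Kbound_Knorm K'C.
  exact: inK_Knorm_le (Kbound_add KC K'C).
- move=> m n p K K' /Kbound_Knorm KC /Kbound_Knorm K'C.
  exact: inK_Knorm_le (Kbound_mul hb0 hba KC K'C).
- move=> n K h /Kbound_Knorm KC Ku Kh.
  exact: inK_Knorm_le (Kbound_inv hb0 hba KC Ku Kh).
Qed.
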